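(* For all integers $n$ and $d$ with $3\leq d<\left\lceil\frac{n}{2}\right\rceil$, $$t(n,d)\geq n-d-3+\left\lceil\frac{n-1}{d}\right\rceil.$$
   Context: All graphs are finite, simple and undirected. In an edge-colored graph (adjacent edges may receive the same color), a path is a rainbow path if no two of its edges have the same color. A graph $G$ is $d$-rainbow connected if there is an edge-coloring of $G$ using $d$ colors such that every two distinct vertices of $G$ are joined by a rainbow path. For positive integers $n$ and $d$, $t(n,d)$ denotes the minimum number of edges of a $d$-rainbow connected graph on $n$ vertices. *)

From mathcomp Require Import all_boot.
Set Implicit Arguments. Unset Strict Implicit. Unset Printing Implicit Defensive.

Definition simple_graph (n : nat) (e : rel 'I_n) : Prop :=
  irreflexive e /\ symmetric e.

Definition num_edges (n : nat) (e : rel 'I_n) : nat :=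
  #|[set p : 'I_n * 'I_n | e p.1 p.2 && (p.1 < p.2)%N]|.

(* An edge-colouring with (at most) d colours: a colour for each unordered pair,
   i.e. a symmetric function; only its values on edges matter. *)
Definition edge_coloring (n d : nat) (c : 'I_n -> 'I_n -> 'I_d) : Prop :=
  forall x y, c x y = c y x.

Definition path_colors (n d : nat) (c : 'I_n -> 'I_n -> 'I_d) (x : 'I_n)
  (p : seq 'I_n) : seq 'I_d :=
  pairmap c x p.

Definition rainbow_path (n d : nat) (e : rel 'I_n) (c : 'I_n -> 'I_n -> 'I_d)
  (x y : 'I_n) (p : seq 'I_n) : bool :=
  [&& path e x p, last x p == y, uniq (x :: p) & uniq (path_colors c x p)].

Definition rainbow_connected (n d : nat) (e : rel 'I_n) : Prop :=
  exists c : 'I_n -> 'I_n -> 'I_d, edge_coloring c /\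
    forall x y : 'I_n, x != y -> exists p : seq 'I_n, rainbow_path e c x y p.

Definition ceil_div (a b : nat) : nat := (a + b.-1) %/ b.

From mathcomp Require Import all_boot zify.
From Stdlib Require Import ZArith Lia.
Set Implicit Arguments. Unset Strict Implicit. Unset Printing Implicit Defensive.

(* Fix a colour [i] and let [G_i] be [G] without its edges of colour [i], with
   [k_i] components. A rainbow path uses colour [i] at most once, so any two
   components of [G_i] are joined by an edge of colour [i]: there are at least
   [k_i (k_i - 1) / 2] such edges, while [G_i] itself has at least [n - k_i]
   edges. Summing the latter bound over the [d] colours gives
   [d (n - k) <= (d - 1) m] for [k = max k_i]; together with
   [m >= n - k + k (k - 1) / 2] this forces the claimed lower bound on [m]. *)

Section SpanningForest.
Variables (n : nat) (r : rel 'I_n).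
Hypothesis rsym : symmetric r.

Fixpoint within (z : 'I_n) (j : nat) (y : 'I_n) : bool :=
  if j is j'.+1 then within z j' y || [exists x, r y x && within z j' x]
  else y == z.

Lemma connect_within z y : connect r y z -> exists j, within z j y.
Proof.
case/connectP=> p + ->; elim: p y => [|x p IHp] y /=.
  by move=> _; exists 0 => /=.
case/andP=> ryx /IHp[j xwithin]; exists j.+1.
by apply/orP; right; apply/existsP; exists x; rewrite ryx.
Qed.

Definition depth (y : 'I_n) : nat :=
  ex_minn (connect_within (connect_root r y)).

Lemma depth_within y : within (root r y) (depth y) y.
Proof. by rewrite /depth; case: ex_minnP. Qed.

Lemma depth_min y j : within (root r y) j y -> depth y <= j.
Proof. by rewrite /depth; case: ex_minnP => k _; apply. Qed.

Let rcsym : connect_sym r := sym_connect_sym rsym.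

Lemma exists_parent y : ~~ roots r y -> exists x, r y x && (depth x < depth y).
Proof.
move=> nroot; move: (depth_within y) (@depth_min y).
case: (depth y) => [|j] /= ywithin dmin.
  by move: nroot; rewrite (eqP ywithin) (roots_root rcsym).
case/orP: ywithin => [/dmin|/existsP[x /andP[ryx xwithin]]]; first by rewrite ltnn.
exists x; rewrite ryx ltnS; apply: depth_min.
by have -> : root r x = root r y by apply/esym/(rootP rcsym)/connect1.
Qed.

Definition parent (y : 'I_n) : 'I_n :=
  odflt y [pick x | r y x && (depth x < depth y)].

Lemma parent_spec y : ~~ roots r y -> r y (parent y) && (depth (parent y) < depth y).
Proof.
move/exists_parent=> [x xpar]; rewrite /parent.
by case: pickP => [//|/(_ x)]; rewrite xpar.
Qed.

(* Every non-root is sent to the edge joining it to its parent; depths strictly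
   decrease towards the root, so distinct non-roots give distinct edges. *)
Lemma num_edges_ge_forest : n <= #|roots r| + num_edges r.
Proof.
pose edge (y : 'I_n) := if y < parent y then (y, parent y) else (parent y, y).
have nonroots : n = #|roots r| + #|[predC roots r]| by rewrite cardC card_ord.
rewrite {1}nonroots leq_add2l.
have edge_inj : {in [predC roots r] &, injective edge}.
  move=> y y' /parent_spec/andP[_ dy] /parent_spec/andP[_ dy'].
  rewrite /edge; do 2 case: ifP => _; case=> e1 e2 //.
  + by move: dy dy'; rewrite e2 -e1 => /ltn_trans lt /lt; rewrite ltnn.
  + by move: dy dy'; rewrite e1 -e2 => /ltn_trans lt /lt; rewrite ltnn.
rewrite -(card_in_imset edge_inj); apply/subset_leq_card/subsetP => p.
case/imsetP=> y /parent_spec/andP[ry dy] ->; rewrite inE /edge.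
case: ltngtP => [lt|gt|/val_inj eq] /=; first by rewrite ry.
- by rewrite rsym ry.
- by move: dy; rewrite -eq ltnn.
Qed.

End SpanningForest.

Lemma num_edges_split n (r s : rel 'I_n) :
  num_edges [rel x y | r x y && s x y] + num_edges [rel x y | r x y && ~~ s x y]
  = num_edges r.
Proof.
rewrite /num_edges -[in RHS](cardsID [set p : 'I_n * 'I_n | s p.1 p.2]).
by congr (_ + _); apply: eq_card => p; rewrite !inE /=;
  case: (r _ _); case: (s _ _); case: (_ < _).
Qed.

Lemma sum_num_edges_partition n d (r : rel 'I_n) (f : 'I_n -> 'I_n -> 'I_d) :
  \sum_(i < d) num_edges [rel x y | r x y && (f x y == i)] = num_edges r.
Proof.
rewrite /num_edges -sum1_card (partition_big (fun p => f p.1 p.2) predT) //=.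
apply: eq_bigr => i _; rewrite sum1dep_card; apply: eq_card => p; rewrite !inE /=.
by case: (r _ _); case: (f _ _ == i); case: (_ < _).
Qed.

Lemma card_rel_le_num_edges n (s : rel 'I_n) :
  irreflexive s -> symmetric s -> #|[set p | s p.1 p.2]| <= 2 * num_edges s.
Proof.
move=> sirr ssym; set L := [set p : 'I_n * 'I_n | s p.1 p.2 && (p.1 < p.2)].
apply: (@leq_trans #|L :|: [set (q.2, q.1) | q in L]|).
  apply/subset_leq_card/subsetP => q; rewrite !inE => sq.
  case: (ltngtP q.1 q.2) => [lt|gt|/val_inj eq].
  - by rewrite sq.
  - apply/orP; right; apply/imsetP; exists (q.2, q.1); last by case: q {sq gt}.
    by rewrite inE /= ssym sq gt.
  - by move: sq; rewrite eq sirr.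
rewrite mul2n -addnn; apply: leq_trans (leq_card_setU _ _) _.
by rewrite leq_add2l leq_imset_card.
Qed.

Lemma card_distinct_pairs (T : finType) (R : {pred T}) :
  #|R| * #|R| <= #|[set p : T * T | [&& p.1 \in R, p.2 \in R & p.1 != p.2]]| + #|R|.
Proof.
rewrite -cardX; set D := [set p : T * T | _].
apply: (@leq_trans #|D :|: [set (x, x) | x in R]|).
  apply/subset_leq_card/subsetP => [[x y]]; rewrite !inE /= => /andP[xR yR].
  by rewrite xR yR /=; case: eqP => [<-|//] /=; apply/imsetP; exists x.
by apply: leq_trans (leq_card_setU _ _) _; rewrite leq_add2l leq_imset_card.
Qed.

Definition color_class n d (e : rel 'I_n) (c : 'I_n -> 'I_n -> 'I_d) (i : 'I_d) :
  rel 'I_n := [rel x y | e x y && (c x y == i)].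

Definition color_removed n d (e : rel 'I_n) (c : 'I_n -> 'I_n -> 'I_d) (i : 'I_d) :
  rel 'I_n := [rel x y | e x y && (c x y != i)].

Section RainbowComponents.
Variables (n d : nat) (e : rel 'I_n) (c : 'I_n -> 'I_n -> 'I_d) (i : 'I_d).
Hypotheses (eirr : irreflexive e) (esym : symmetric e) (csym : edge_coloring c).
Hypothesis rainbow : forall x y, x != y -> exists p, rainbow_path e c x y p.

Local Notation G := (color_removed e c i).
Local Notation C := (color_class e c i).

Lemma path_color_removed x p :
  path e x p -> i \notin path_colors c x p -> path G x p.
Proof.
elim: p x => [|y p IHp] x //= /andP[exy pth].
rewrite in_cons negb_or => /andP[cxy ynew].
by rewrite /color_removed /= exy eq_sym cxy IHp.
Qed.

Lemma rainbow_path_crosses x p :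
  path e x p -> uniq (path_colors c x p) -> ~~ connect G x (last x p) ->
  exists u w, [&& C u w, connect G x u & connect G w (last x p)].
Proof.
elim: p x => [|y p IHp] x /=; first by rewrite connect0.
case/andP=> exy pth /andP[ynew uniqp] disconnected.
case cxy: (c x y == i).
  exists x, y; rewrite /color_class /= exy cxy connect0; apply/connectP; exists p => //.
  by apply: path_color_removed => //; rewrite -(eqP cxy).
have Gxy : G x y by rewrite /color_removed /= exy cxy.
have [|u [w /and3P[Cuw yu wlast]]] := IHp y pth uniqp.
  by apply: contra disconnected; apply/connect_trans/connect1.
by exists u, w; rewrite Cuw wlast (connect_trans (connect1 Gxy) yu).
Qed.

(* Any two components of [G] are joined by an edge of colour [i], found on a
   rainbow path between them; hence mapping each colour-[i] edge to the pair of
   components of its ends covers all pairs of distinct components. *)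
Lemma card_roots_color_removed :
  #|roots G| * #|roots G| <= 2 * num_edges C + #|roots G|.
Proof.
have Gsym : symmetric G by move=> x y; rewrite /color_removed /= esym csym.
have Gcsym := sym_connect_sym Gsym.
apply: leq_trans (card_distinct_pairs (roots G)) _; rewrite leq_add2r.
have Cirr : irreflexive C by move=> x; rewrite /color_class /= eirr.
have Csym : symmetric C by move=> x y; rewrite /color_class /= esym csym.
apply: leq_trans (card_rel_le_num_edges Cirr Csym).
set colored := [set p | _].
apply: (leq_trans _ (leq_imset_card (fun q => (root G q.1, root G q.2)) colored)).
apply/subset_leq_card/subsetP => -[x y]; rewrite inE /= => /and3P[xroot yroot xy].
have [p /and4P[pth /eqP plast _ prainbow]] := rainbow xy.
have [|u [w /and3P[Cuw xu wy]]] := rainbow_path_crosses pth prainbow.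
  by rewrite plast -root_connect // (eqP xroot) (eqP yroot).
apply/imsetP; exists (u, w); first by rewrite inE.
rewrite plast in wy; rewrite /= -(eqP xroot) -(eqP yroot).
by congr (_, _); apply/eqP; rewrite root_connect // Gcsym.
Qed.

End RainbowComponents.

Lemma average_forest_bound d n m K (k g h : 'I_d -> nat) :
  (forall i, n <= k i + g i) -> (forall i, g i + h i = m) ->
  \sum_i h i = m -> (forall i, k i <= K) -> d * n + m <= d * K + d * m.
Proof.
move=> forest edges_split sum_h kK.
have sum_g : \sum_i g i + m = d * m.
  rewrite -{1}sum_h -big_split /= (eq_bigr (fun=> m)) => [|i _]; last exact: edges_split.
  by rewrite sum_nat_const card_ord.
have sum_const j : d * j = \sum_(i < d) j by rewrite sum_nat_const card_ord mulnC.
rewrite -sum_g addnA leq_add2r !sum_const -big_split /=.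
by apply: leq_sum => i _; apply: leq_trans (forest i) _; rewrite leq_add2r.
Qed.

(* If [m] were smaller, [avg] and [qd] would give [m - n + d^2 + 3d + 2 <= d k]
   while [forest] and [cross] give [k^2 - 3k <= 2 (m - n)], whence
   [(2k - 2d - 3)^2 + 4d^2 + 12d + 7 <= 0]. *)
Lemma edge_count_arith n d m k a :
  3 <= d -> d < ceil_div n 2 -> d * n + m <= d * k + d * m -> n <= k + a ->
  k * k <= 2 * (m - a) + k -> a <= m -> n - d - 3 + ceil_div (n - 1) d <= m.
Proof.
rewrite /ceil_div => d3 dn avg forest cross am.
have := leq_divM (n - 1 + d.-1) d; set q := _ %/ d => qd.
rewrite leqNgt; apply/negP => lt.
have := Z.square_nonneg (2 * Z.of_nat k - 3 - 2 * Z.of_nat d).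
nia.
Qed.

Theorem proposition2 (n d : nat) (e : rel 'I_n) :
  3 <= d -> d < ceil_div n 2 ->
  simple_graph e -> rainbow_connected d e ->
  n - d - 3 + ceil_div (n - 1) d <= num_edges e.
Proof.
move=> d3 dn [eirr esym] [c [csym rainbow]].
pose k i := #|roots (color_removed e c i)|.
have forest i : n <= k i + num_edges (color_removed e c i).
  by apply: num_edges_ge_forest => x y; rewrite /color_removed /= esym csym.
have edges_split i :
    num_edges (color_removed e c i) + num_edges (color_class e c i) = num_edges e.
  by rewrite addnC; apply: num_edges_split.
have [imax _ kmax] := @arg_maxnP _ (Ordinal (leq_ltn_trans (leq0n 2) d3)) predT k isT.
apply: (edge_count_arith d3 dn _ (forest imax)).
- apply: (average_forest_bound forest edges_split _ (fun i => kmax i isT)).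
  exact: sum_num_edges_partition.
- by rewrite -(edges_split imax) addKn; apply: card_roots_color_removed.
- by rewrite -(edges_split imax) leq_addr.
Qed.
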